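(* Let $m$ and $n$ be positive integers, let $x$ be a real number, and put $\lambda=n(n+2x+1)$. Then \[ \sum_{i=1}^n (x+i)^{2m-1}=\sum_{k=1}^m F^{(m)}_k(x)\,\lambda^k, \] where, for $1\le k\le m$, \[ F^{(m)}_k(x)=\frac{1}{2m}\sum_{i=k}^m \binom{2m}{2i}\binom{i}{k}\left(x+\frac12\right)^{2i-2k} B_{2m-2i}\!\left(\frac12\right). \]
   Context: The Bernoulli polynomials $B_n(x)$ are defined by the generating function $\sum_{n\ge 0} B_n(x)\frac{t^n}{n!}=\frac{t e^{xt}}{e^t-1}$. *)

From mathcomp Require Import all_boot all_order all_algebra.
From mathcomp Require Import reals.
Set Implicit Arguments. Unset Strict Implicit. Unset Printing Implicit Defensive.
Import Order.TTheory GRing.Theory Num.Theory.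
Local Open Scope ring_scope.

(* The generating function identity
     sum_{n>=0} B_n(x) t^n/n! = t e^{xt} / (e^t - 1)
   is stated as the formal power series identity
     (sum_n B_n(x) t^n/n!) * (e^t - 1) = t e^{xt},
   i.e. coefficientwise: for every N,
     sum_{k<N} B_k(x) / (k! (N-k)!) = [N >= 1] x^(N-1)/(N-1)!.
   This determines B uniquely. *)
Definition bernoulli_gf (R : fieldType) (B : nat -> R -> R) : Prop :=
  forall (x : R) (N : nat),
    \sum_(k < N) B k x / ((k`!)%:R * ((N - k)`!)%:R)
    = if N is N'.+1 then x ^+ N' / (N'`!)%:R else 0.

Definition Fmk (R : fieldType) (B : nat -> R -> R) (m k : nat) (x : R) : R :=
  ((2 * m)%:R)^-1 *
  \sum_(k <= i < m.+1)
     ('C(2 * m, 2 * i))%:R * ('C(i, k))%:R * (x + 2^-1) ^+ (2 * i - 2 * k)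
     * B (2 * m - 2 * i)%N 2^-1.

(* Telescoping B_2m(x + 1) - B_2m(x) = 2m x^(2m-1) turns the left-hand side into
   (B_2m(x + n + 1) - B_2m(x + 1)) / 2m.  The reflection B_j(1 - x) = (-1)^j B_j(x)
   kills B_j(1/2) for odd j, so B_2m(1/2 + z) is a polynomial in z^2.  With
   y = x + 1/2 we have x + n + 1 = 1/2 + (y + n) and (y + n)^2 = y^2 + lambda;
   expanding (y^2 + lambda)^i binomially and cancelling the lambda^0 term against
   B_2m(x + 1) leaves exactly the coefficients F_k.  The translation, difference
   and reflection formulas are read off the generating function, with power
   series handled as coefficient sequences. *)

From mathcomp Require Import all_boot all_order all_algebra.
From mathcomp Require Import reals boolp.
From mathcomp Require Import ring zify.
Import Order.TTheory GRing.Theory Num.Theory.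
Set Implicit Arguments. Unset Strict Implicit. Unset Printing Implicit Defensive.
Local Open Scope ring_scope.

Lemma sumr_even_odd (V : nmodType) (F : nat -> V) m :
  \sum_(j < (2 * m).+1) F j = \sum_(i < m.+1) F (2 * i)%N + \sum_(i < m) F (2 * i).+1.
Proof.
elim: m => [|m IH]; first by rewrite !big_ord1 big_ord0 addr0.
rewrite (_ : (2 * m.+1).+1 = (2 * m).+3); last by lia.
rewrite 2!big_ord_recr IH [in RHS]big_ord_recr [X in _ = _ + X]big_ord_recr /=.
by rewrite mulnS add2n addrACA -addrA [F _ + F _]addrC.
Qed.

Lemma sum_mul_exprDn (R : comNzRingType) (c : nat -> R) (a b : R) m :
  \sum_(i < m.+1) c i * (a + b) ^+ i
  = \sum_(k < m.+1) (\sum_(k <= i < m.+1) c i * 'C(i, k)%:R * a ^+ (i - k)) * b ^+ k.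
Proof.
have expand (i : 'I_m.+1) : c i * (a + b) ^+ i
    = \sum_(k < m.+1) c i * 'C(i, k)%:R * a ^+ (i - k) * b ^+ k.
  rewrite exprDn mulr_sumr.
  rewrite (big_ord_widen m.+1 (fun k => c i * (a ^+ (i - k) * b ^+ k *+ 'C(i, k)))) //.
  rewrite big_mkcond.
  apply: eq_bigr => k _; case: ifP => [_ | /negbT]; first by rewrite -mulr_natr; ring.
  by rewrite -leqNgt => /bin_small->; rewrite mulr0 !mul0r.
rewrite (eq_bigr _ (fun i _ => expand i)) exchange_big /=.
apply: eq_bigr => k _; rewrite mulr_suml big_geq_mkord [RHS]big_mkcond.
apply: eq_bigr => i _; case: leqP => // /bin_small->.
by rewrite mulr0 !mul0r.
Qed.

Lemma sum_mul_exprDn_sub (R : comNzRingType) (c : nat -> R) (a b : R) m :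
  \sum_(i < m.+1) c i * (a + b) ^+ i - \sum_(i < m.+1) c i * a ^+ i
  = \sum_(1 <= k < m.+1) (\sum_(k <= i < m.+1) c i * 'C(i, k)%:R * a ^+ (i - k)) * b ^+ k.
Proof.
rewrite sum_mul_exprDn big_ord_recl big_add1 big_mkord /= expr0 mulr1 big_mkord.
rewrite (eq_bigr (fun i : 'I_m.+1 => c i * a ^+ i)) => [|i _].
  by rewrite addrC addKr.
by rewrite bin0 subn0 mulr1.
Qed.

Section Convolution.

Variable R : comNzRingType.
Implicit Types a b c : nat -> R.

(* A sequence [a] stands for the power series sum_k a k t^k; [conv] is their product. *)
Definition conv a b : nat -> R := fun N => \sum_(k < N.+1) a k * b (N - k)%N.

Definition delta0 : nat -> R := fun k => (k == 0)%:R.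

Lemma conv_coefM a b M N : (N < M)%N ->
  conv a b N = (\poly_(i < M) a i * \poly_(i < M) b i)`_N.
Proof.
move=> ltNM; rewrite coefM; apply: eq_bigr => -[k /= ltkN] _; rewrite !coef_poly.
by rewrite (leq_ltn_trans _ ltNM) ?(leq_ltn_trans (leq_subr k N) ltNM) // -ltnS.
Qed.

Lemma poly_conv a b M :
  \poly_(i < M) conv a b i = \poly_(i < M) (\poly_(i < M) a i * \poly_(i < M) b i)`_i.
Proof. by apply/polyP => i; rewrite !coef_poly; case: ifP => // /conv_coefM. Qed.

Lemma coefM_poly_trunc (p q : {poly R}) M N : (N < M)%N ->
  (\poly_(i < M) p`_i * q)`_N = (p * q)`_N.
Proof.
move=> ltNM; rewrite !coefM; apply: eq_bigr => -[k /= ltkN] _.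
by rewrite coef_poly (leq_ltn_trans _ ltNM) // -ltnS.
Qed.

Lemma convC a b : conv a b = conv b a.
Proof. by apply/funext => N; rewrite !(@conv_coefM _ _ N.+1) // mulrC. Qed.

Lemma convA a b c : conv a (conv b c) = conv (conv a b) c.
Proof.
rewrite [conv a _]convC; apply/funext => N.
rewrite !(@conv_coefM _ _ N.+1) // !poly_conv.
by rewrite !coefM_poly_trunc // mulrC mulrA.
Qed.

Lemma convDl a b c : conv (a \+ b) c = conv a c \+ conv b c.
Proof.
apply/funext => N; rewrite /conv /= -big_split /=.
by apply: eq_bigr => k _; rewrite mulrDl.
Qed.

Lemma convNl a c : conv (\- a) c = \- conv a c.
Proof.
apply/funext => N; rewrite /conv /= -sumrN.
by apply: eq_bigr => k _; rewrite mulNr.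
Qed.

Lemma convDr a b c : conv c (a \+ b) = conv c a \+ conv c b.
Proof. by rewrite convC convDl !(convC c). Qed.

Lemma convNr a c : conv c (\- a) = \- conv c a.
Proof. by rewrite convC convNl convC. Qed.

Lemma conv1r a : conv a delta0 = a.
Proof.
apply/funext => N; rewrite /conv big_ord_recr /= subnn mulr1 big1 ?add0r // => k _.
by rewrite /delta0 subn_eq0 leqNgt ltn_ord mulr0.
Qed.

Lemma conv1l a : conv delta0 a = a.
Proof. by rewrite convC conv1r. Qed.

(* The coefficient of t^(N+1) in [conv a c] is [a N * c 1] plus terms
   involving only [a 0], ..., [a N.-1]. *)
Lemma conv_rinj c : c 0%N = 0 -> GRing.rreg (c 1%N) -> injective (fun a => conv a c).
Proof.
move=> c0 c1reg a b eq_ab; apply/funext.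
suff eq_lt N k : (k < N)%N -> a k = b k by move=> k; apply: (eq_lt k.+1).
elim: N k => [|N IH] k //; rewrite ltnS leq_eqVlt => /orP[/eqP-> | /IH //].
have /(congr1 (fun f => f N.+1)) := eq_ab.
rewrite /conv !big_ord_recr /= subnn c0 !mulr0 !addr0 subSn // subnn.
rewrite (eq_bigr (fun i : 'I_N => b i * c (N.+1 - i)%N)) => [|i _]; last by rewrite IH.
by move/addrI/c1reg.
Qed.

(* [altseq a] is the series of a(-t). *)
Definition altseq a : nat -> R := fun k => (-1) ^+ k * a k.

Lemma conv_altseq a b : conv (altseq a) (altseq b) = altseq (conv a b).
Proof.
apply/funext => N; rewrite /conv /altseq mulr_sumr; apply: eq_bigr => -[k /= ltkN] _.
by rewrite mulrCA !mulrA -exprD subnK // -ltnS.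
Qed.

End Convolution.

Section ExponentialSeries.

Variable R : numFieldType.
Implicit Types a b : R.

Lemma natr_fact_neq0 n : (n`!)%:R != 0 :> R.
Proof. by rewrite pnatr_eq0 -lt0n fact_gt0. Qed.

Lemma natr_bin_fact n k : (k <= n)%N ->
  'C(n, k)%:R = n`!%:R / (k`!%:R * (n - k)`!%:R) :> R.
Proof.
move=> le_kn; rewrite -(bin_fact le_kn) !natrM mulfK //.
by rewrite mulf_neq0 ?natr_fact_neq0.
Qed.

Definition expseq a : nat -> R := fun k => a ^+ k / k`!%:R.

Definition expm1seq : nat -> R := expseq 1 \- delta0 R.

Definition texpseq a : nat -> R := fun k => if k is k'.+1 then expseq a k' else 0.

Lemma conv_expseq a b : conv (expseq a) (expseq b) = expseq (a + b).
Proof.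
apply/funext => N; rewrite /conv /expseq addrC exprDn mulr_suml.
apply: eq_bigr => -[k /= ltkN] _.
rewrite -[_ *+ 'C(N, k)]mulr_natr natr_bin_fact; last by rewrite -ltnS.
by field; rewrite !natr_fact_neq0.
Qed.

Lemma expseq0 : expseq 0 = delta0 R.
Proof. by apply/funext => -[|k]; rewrite /expseq /delta0 expr0n ?divr1 ?mul0r. Qed.

Lemma conv_texpseq a b : conv (texpseq a) (expseq b) = texpseq (a + b).
Proof.
apply/funext => -[|N]; first by rewrite /conv big_ord1 mul0r.
by rewrite /conv big_ord_recl mul0r add0r /= -conv_expseq.
Qed.

Lemma altseq_texpseq a : altseq (texpseq a) = \- texpseq (- a).
Proof.
apply/funext => -[|k] /=; rewrite /altseq /texpseq /expseq ?mulr0 ?oppr0 //.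
by rewrite exprS mulN1r mulNr (exprNn a) mulrA.
Qed.

Lemma expm1seq0 : expm1seq 0 = 0.
Proof. by rewrite /expm1seq /= /expseq /delta0 expr0 divr1 subrr. Qed.

Lemma expm1seq1 : expm1seq 1 = 1.
Proof. by rewrite /expm1seq /= /expseq /delta0 expr1 divr1 subr0. Qed.

Lemma conv_expm1seq_inj : injective (fun a : nat -> R => conv a expm1seq).
Proof. by apply: conv_rinj; rewrite ?expm1seq0 ?expm1seq1 //; apply: rreg1. Qed.

Lemma conv_altseq_expm1seq : conv (altseq expm1seq) (expseq 1) = \- expm1seq.
Proof.
have -> : altseq expm1seq = expseq (-1) \- delta0 R.
  apply/funext => -[|k]; rewrite /altseq /expm1seq /expseq /delta0 /=.
    by rewrite !expr0 !mul1r.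
  by rewrite !subr0 mulrA expr1n mulr1.
rewrite convDl convNl conv_expseq conv1l addNr expseq0.
by apply/funext => k; rewrite /= opprB.
Qed.

End ExponentialSeries.

Section BernoulliPolynomials.

Variables (R : numFieldType) (B : nat -> R -> R).
Hypothesis hB : bernoulli_gf B.
Implicit Types x h : R.

(* The series t e^(xt) / (e^t - 1), by [conv_bernseq_expm1seq]. *)
Definition bernseq x : nat -> R := fun k => B k x / k`!%:R.

Lemma conv_bernseq_expm1seq x : conv (bernseq x) (expm1seq R) = texpseq x.
Proof.
rewrite /expm1seq convDr convNr conv1r; apply/funext => N /=.
rewrite /conv big_ord_recr /= subnn /expseq expr0 divr1 mulr1 addrK.
rewrite /texpseq -(hB x N); apply: eq_bigr => -[k /= ltkN] _.
by rewrite /bernseq expr1n div1r invfM mulrA.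
Qed.

Lemma bernseq_addr x h : bernseq (x + h) = conv (bernseq x) (expseq h).
Proof.
apply: conv_expm1seq_inj.
rewrite -convA [conv (expseq h) _]convC convA !conv_bernseq_expm1seq.
by rewrite conv_texpseq.
Qed.

Lemma altseq_bernseq x : altseq (bernseq (1 - x)) = bernseq x.
Proof.
apply: conv_expm1seq_inj.
have : \- conv (altseq (bernseq (1 - x))) (expm1seq R) = \- texpseq x.
  rewrite -convNr -conv_altseq_expm1seq convA conv_altseq conv_bernseq_expm1seq.
  by rewrite altseq_texpseq convNl conv_texpseq opprB subrK.
rewrite conv_bernseq_expm1seq => eq_opp; apply/funext => N.
by apply: oppr_inj; exact: (congr1 (fun f => f N) eq_opp).
Qed.

Lemma bernoulli_addr x h n :
  B n (x + h) = \sum_(k < n.+1) 'C(n, k)%:R * B k x * h ^+ (n - k).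
Proof.
have := congr1 (fun f => f n) (bernseq_addr x h).
rewrite /= /bernseq /conv /expseq => /(canRL (divfK (natr_fact_neq0 R n))) ->.
rewrite mulr_suml; apply: eq_bigr => -[k /= ltkn] _.
rewrite natr_bin_fact; last by rewrite -ltnS.
by field; rewrite !natr_fact_neq0.
Qed.

Lemma bernoulli_addr1 x n : B n.+1 (x + 1) - B n.+1 x = n.+1%:R * x ^+ n.
Proof.
have expseq1 : expseq 1 = expm1seq R \+ delta0 R by apply/funext => k; rewrite /= subrK.
have := congr1 (fun f => f n.+1) (bernseq_addr x 1).
rewrite expseq1 convDr conv_bernseq_expm1seq conv1r /= /bernseq /texpseq /expseq.
move=> /(canRL (divfK (natr_fact_neq0 R n.+1))) ->; rewrite factS natrM.
by field; rewrite natr_fact_neq0 nat1r pnatr_eq0.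
Qed.

Lemma bernoulli_odd_half k : B (2 * k).+1 2^-1 = 0.
Proof.
have := congr1 (fun f => f (2 * k).+1) (altseq_bernseq 2^-1).
have -> : 1 - 2^-1 = 2^-1 :> R by field.
rewrite /= /altseq /bernseq -signr_odd /= oddM andFb expr1 mulN1r.
move/eqP; rewrite eqNr mulf_eq0 invr_eq0 (negbTE (natr_fact_neq0 _ _)) orbF.
by move/eqP.
Qed.

Lemma bernoulli_half_addr_even m z :
  B (2 * m) (2^-1 + z)
  = \sum_(i < m.+1) 'C(2 * m, 2 * i)%:R * B (2 * m - 2 * i)%N 2^-1 * (z ^+ 2) ^+ i.
Proof.
rewrite bernoulli_addr (reindex_inj rev_ord_inj) /=.
set F := fun j => 'C(2 * m, j)%:R * B (2 * m - j)%N 2^-1 * z ^+ j.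
rewrite (eq_bigr (fun j : 'I_(2 * m).+1 => F j)) => [|j _]; last first.
  by rewrite /F subSS bin_sub ?subKn // -ltnS.
rewrite sumr_even_odd [X in _ + X]big1 ?addr0 => [|i _]; last first.
  rewrite /F; have -> : (2 * m - (2 * i).+1)%N = (2 * (m - i - 1)).+1.
    by have := ltn_ord i; lia.
  by rewrite bernoulli_odd_half mulr0 mul0r.
by apply: eq_bigr => i _; rewrite /F exprM.
Qed.

Lemma sum_powers_bernoulli x n p : \sum_(1 <= i < n.+1) (x + i%:R) ^+ p
  = (B p.+1 (x + n.+1%:R) - B p.+1 (x + 1)) / p.+1%:R.
Proof.
rewrite -[x + 1]/(x + 1%:R).
have /= <- := telescope_sumr (fun i => B p.+1 (x + i%:R)) (ltn0Sn n).
rewrite mulr_suml; apply: eq_bigr => i _.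
by rewrite -natr1 addrA bernoulli_addr1 mulrC mulKf ?pnatr_eq0.
Qed.

End BernoulliPolynomials.

Lemma FmkE (R : fieldType) (B : nat -> R -> R) m k x :
  Fmk B m k x = (2 * m)%:R^-1 * \sum_(k <= i < m.+1)
    'C(2 * m, 2 * i)%:R * B (2 * m - 2 * i)%N 2^-1 * 'C(i, k)%:R
      * ((x + 2^-1) ^+ 2) ^+ (i - k).
Proof.
rewrite /Fmk; congr (_ * _); apply: eq_bigr => i _.
by rewrite -exprM mulnBr; ring.
Qed.

Theorem mainTheorem1 (R : realType) (B : nat -> R -> R) (hB : bernoulli_gf B)
  (m n : nat) (hm : (0 < m)%N) (hn : (0 < n)%N) (x : R) :
  let lambda := n%:R * (n%:R + 2 * x + 1) in
  \sum_(1 <= i < n.+1) (x + i%:R) ^+ (2 * m - 1)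
  = \sum_(1 <= k < m.+1) Fmk B m k x * lambda ^+ k.
Proof.
move=> lambda.
have [p def2m] : exists p, (2 * m)%N = p.+1 by exists (2 * m).-1; rewrite prednK // muln_gt0.
have -> : (2 * m - 1)%N = p by rewrite def2m subn1.
rewrite (sum_powers_bernoulli hB) -def2m.
set y := x + 2^-1.
have -> : x + n.+1%:R = 2^-1 + (y + n%:R) by rewrite /y -natr1; field.
have -> : x + 1 = 2^-1 + y by rewrite /y; field.
rewrite !(bernoulli_half_addr_even hB).
have -> : (y + n%:R) ^+ 2 = y ^+ 2 + lambda by rewrite /y /lambda; field.
have /= -> := sum_mul_exprDn_sub
  (fun i => 'C(2 * m, 2 * i)%:R * B (2 * m - 2 * i)%N 2^-1) (y ^+ 2) lambda m.
rewrite mulr_suml; apply: eq_bigr => k _.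
by rewrite FmkE mulrAC [_^-1 * _]mulrC.
Qed.
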